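(* Let $G$ be a profinite group such that $H^*(G)$ is $2$-quadratic. Then the kernel of the inflation map $\inf_G\colon H^2(G^{[2]})_{\mathrm{dec}}\to H^2(G)$ is generated by those elements of the form $\psi\cup\psi'$ with $\psi,\psi'\in H^1(G^{[2]})$ which lie in this kernel.
   Context: $p$ is a prime, $q=p^s$ ($s\ge1$); $H^i(G)=H^i(G,\mathbb{Z}/q)$ is continuous cohomology with trivial action, with cup product. $G^{(2)}=G^q[G,G]$ and $G^{[2]}=G/G^{(2)}$. $H^2(G)_{\mathrm{dec}}$ is the image of the cup product $H^1(G)\otimes H^1(G)\to H^2(G)$. $H^*(G)$ is called $2$-quadratic if the kernel of the cup product map $H^1(G)\otimes_{\mathbb{Z}/q}H^1(G)\to H^2(G)$ equals the subgroup $C_2$ generated by all $\psi_1\otimes\psi_2$ with $\psi_1\cup\psi_2=0$ (i.e., the induced map $H^1(G)^{\otimes 2}/C_2\to H^2(G)_{\mathrm{dec}}$ is an isomorphism). *)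

From HB Require Import structures.
From mathcomp Require Import all_boot all_order all_algebra.
From mathcomp Require Import all_classical all_reals all_analysis.
From Stdlib Require List.
Unset Printing Implicit Defensive.
Import Order.TTheory GRing.Theory Num.Theory.
Local Open Scope classical_set_scope.
Local Open Scope ring_scope.

Definition is_group {G : Type} (mul : G -> G -> G) (inv : G -> G) (one : G) :=
  [/\ (forall x y z, mul x (mul y z) = mul (mul x y) z),
      (forall x, mul one x = x), (forall x, mul x one = x),
      (forall x, mul (inv x) x = one) & (forall x, mul x (inv x) = one)].

Definition is_profinite_group {G : topologicalType}
  (mul : G -> G -> G) (inv : G -> G) (one : G) :=
  [/\ is_group mul inv one,
      continuous (fun x : G * G => mul x.1 x.2),
      continuous inv,
      compact [set: G] &
      hausdorff_space G /\ totally_disconnected [set: G]].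

(* continuity into the discrete module Z/q = local constancy *)
Definition locconst {T : topologicalType} {V : Type} (f : T -> V) :=
  forall x, \forall y \near x, f y = f x.

Section Cohomology.
Variables (q : nat) (G : topologicalType)
  (mul : G -> G -> G) (inv : G -> G) (one : G).

Definition gpow (g : G) (n : nat) : G := iter n (mul g) one.
Definition gcomm (g h : G) : G := mul (mul (inv g) (inv h)) (mul g h).

Definition is_subgroup (S : set G) :=
  S one /\ (forall x y, S x -> S y -> S (mul x (inv y))).

(* G^(2) = G^q [G,G] : the closed subgroup generated by q-th powers and
   commutators *)
Definition Gq2 : set G := fun x =>
  forall S : set G, closed S -> is_subgroup S ->
    (forall g, S (gpow g q)) -> (forall g h, S (gcomm g h)) -> S x.

(* H^1(G, Z/q) with trivial action = continuous homomorphisms G -> Z/q *)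
Definition is_H1 (f : G -> 'Z_q) :=
  locconst f /\ (forall g h, f (mul g h) = f g + f h).

(* H^1(G^[2]) = continuous homomorphisms G/G^(2) -> Z/q, realised as those of G
   that are trivial on G^(2) (inflation identifies them) *)
Definition is_H1_quot (f : G -> 'Z_q) := is_H1 f /\ (forall n, Gq2 n -> f n = 0).

Definition cup (a b : G -> 'Z_q) : G * G -> 'Z_q := fun x => a x.1 * b x.2.

Definition cobound (c : G -> 'Z_q) : G * G -> 'Z_q :=
  fun x => c x.2 - c (mul x.1 x.2) + c x.1.

Definition zero_H2 (f : G * G -> 'Z_q) :=
  exists c : G -> 'Z_q, locconst c /\ f = cobound c.

(* a 2-cocycle of G^[2] (pulled back to G, i.e. G^(2)-invariant) is zero in
   H^2(G^[2]): it is the coboundary of a continuous cochain of G^[2] *)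
Definition zero_H2_quot (f : G * G -> 'Z_q) :=
  exists c : G -> 'Z_q, [/\ locconst c, (forall g n, Gq2 n -> c (mul g n) = c g)
                          & f = cobound c].

(* H^*(G) is 2-quadratic: every element sum_i a_i (x) b_i of H^1 (x) H^1 in
   the kernel of the cup product lies in C_2.  Membership in C_2 is expressed
   through the universal property of H^1 (x) H^1 / C_2: it is killed by every
   biadditive map vanishing on the pairs (a,b) with a u b = 0. *)
Definition quadratic2 :=
  forall l : seq ((G -> 'Z_q) * (G -> 'Z_q)),
    (forall x, List.In x l -> is_H1 x.1 /\ is_H1 x.2) ->
    zero_H2 (fun y => \sum_(x <- l) cup x.1 x.2 y) ->
    forall (M : zmodType) (B : (G -> 'Z_q) -> (G -> 'Z_q) -> M),
      (forall a a' b, is_H1 a -> is_H1 a' -> is_H1 b ->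
          B (fun g => a g + a' g) b = B a b + B a' b) ->
      (forall a b b', is_H1 a -> is_H1 b -> is_H1 b' ->
          B a (fun g => b g + b' g) = B a b + B a b') ->
      (forall a b, is_H1 a -> is_H1 b -> zero_H2 (cup a b) -> B a b = 0) ->
      \sum_(x <- l) B x.1 x.2 = 0.

End Cohomology.

From HB Require Import structures.
From mathcomp Require Import all_boot all_order all_algebra.
From mathcomp Require Import all_classical all_reals all_analysis.
From mathcomp Require Import ring.
From Stdlib Require List.
Import Order.TTheory GRing.Theory Num.Theory.
Local Open Scope ring_scope.

(* Let M be the quotient of the 2-cochains of G by those which become trivial
   in H^2(G^[2]) after subtracting an integral combination of cups a u b with
   a, b in H^1(G^[2]) and a u b = 0 in H^2(G).  Every homomorphism G -> Z/q
   kills G^(2), so H^1(G) = H^1(G^[2]); hence (a, b) |-> [a u b] is a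
   biadditive map H^1(G) x H^1(G) -> M vanishing on the pairs with a u b = 0
   in H^2(G).  By 2-quadraticity it vanishes on every sum of cups that is
   trivial in H^2(G), which is the claim. *)

Section FirstCohomology.
Variables (q : nat) (G : topologicalType)
  (mul : G -> G -> G) (inv : G -> G) (one : G).
Hypothesis q_gt1 : (1 < q)%N.
Hypothesis groupG : is_group mul inv one.
Variable f : G -> 'Z_q.
Hypothesis f_H1 : is_H1 q G mul f.

Lemma H1_one : f one = 0.
Proof.
have [_ f_mul] := f_H1; have [_ mul1g _ _ _] := groupG.
by apply: (@addrI _ (f one)); rewrite addr0 -f_mul mul1g.
Qed.

Lemma H1_inv x : f (inv x) = - f x.
Proof.
have [_ f_mul] := f_H1; have [_ _ _ mulVg _] := groupG.
by apply/eqP; rewrite -addr_eq0 -f_mul mulVg H1_one.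
Qed.

Lemma H1_gpow g n : f (gpow G mul one g n) = f g *+ n.
Proof.
have [_ f_mul] := f_H1.
elim: n => [|n IH]; first by rewrite /gpow /= H1_one.
by rewrite /gpow iterS f_mul -/(gpow G mul one g n) IH mulrS.
Qed.

Lemma H1_gcomm g h : f (gcomm G mul inv g h) = 0.
Proof. by have [_ f_mul] := f_H1; rewrite /gcomm !f_mul !H1_inv; ring. Qed.

(* The zero set of [f] is open and closed by local constancy; being a subgroup
   containing all q-th powers and commutators, it contains G^(2). *)
Lemma H1_Gq2_eq0 n : Gq2 q G mul inv one n -> f n = 0.
Proof.
move=> /(_ (fun x => f x = 0)).
have [f_lc f_mul] := f_H1.
apply=> [x x_cl | | g | g h] /=.
- by have [y [/= fy0 fyx]] := x_cl _ (f_lc x); rewrite -fyx.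
- split=> [|x y /= fx0 fy0]; first exact: H1_one.
  by rewrite f_mul H1_inv fx0 fy0 subr0.
- by rewrite H1_gpow -mulr_natr pchar_Zp ?mulr0.
- exact: H1_gcomm.
Qed.

Lemma H1_quot : is_H1_quot q G mul inv one f.
Proof. by split=> // n; apply: H1_Gq2_eq0. Qed.

End FirstCohomology.

Section Cochains.
Variables (q : nat) (G : topologicalType)
  (mul : G -> G -> G) (inv : G -> G) (one : G).
Hypothesis q_gt1 : (1 < q)%N.
Hypothesis groupG : is_group mul inv one.

Local Notation cochain2 := (G * G -> 'Z_q).
Local Notation cup := (cup q G).
Local Notation is_H1_quot := (is_H1_quot q G mul inv one).
Local Notation zero_H2_quot := (zero_H2_quot q G mul inv one).

Lemma cup_addl (a a' b : G -> 'Z_q) :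
  cup (fun g => a g + a' g) b = cup a b + cup a' b.
Proof. by apply/funext => y; rewrite /cup /= mulrDl. Qed.

Lemma cup_addr (a b b' : G -> 'Z_q) :
  cup a (fun g => b g + b' g) = cup a b + cup a b'.
Proof. by apply/funext => y; rewrite /cup /= mulrDr. Qed.

Lemma zero_H2_quot0 : zero_H2_quot 0.
Proof.
exists 0; split=> //; first by move=> x; apply: nearW.
by apply/funext => y; rewrite /cobound /= subrr addr0.
Qed.

Lemma zero_H2_quotB {u v : cochain2} :
  zero_H2_quot u -> zero_H2_quot v -> zero_H2_quot (fun y => u y - v y).
Proof.
move=> [c [c_lc c_inv ->]] [d [d_lc d_inv ->]].
exists (fun x => c x - d x); split.
- by move=> x; apply: filterS2 (c_lc x) (d_lc x) => y -> ->.
- by move=> g n n_Gq2; rewrite c_inv // d_inv.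
- by apply/funext => y; rewrite /cobound; ring.
Qed.

Definition inf_trivial_cups (t : seq ((G -> 'Z_q) * (G -> 'Z_q) * int)) :=
  forall x, List.In x t -> [/\ is_H1_quot x.1.1, is_H1_quot x.1.2 &
                               zero_H2 q G mul (cup x.1.1 x.1.2)].

Definition cup_comb (t : seq ((G -> 'Z_q) * (G -> 'Z_q) * int)) : cochain2 :=
  fun y => \sum_(x <- t) (cup x.1.1 x.1.2 y *~ x.2).

Definition cup_reducible (u : cochain2) :=
  exists2 t, inf_trivial_cups t & zero_H2_quot (fun y => u y - cup_comb t y).

Lemma cup_reducible0 : cup_reducible 0.
Proof.
exists [::] => //; rewrite /cup_comb.
by under eq_fun do rewrite big_nil subr0; apply: zero_H2_quot0.
Qed.

Lemma cup_reducibleB (u v : cochain2) :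
  cup_reducible u -> cup_reducible v -> cup_reducible (u - v).
Proof.
move=> [t t_triv u_red] [t' t'_triv v_red].
exists (t ++ [seq (x.1, - x.2) | x <- t']).
  move=> x /(List.in_app_or _ _ x) [/t_triv //|x_map].
  by have [y [<- /t'_triv]] := proj1 (List.in_map_iff _ _ _) x_map.
have -> : (fun y => (u - v) y - cup_comb (t ++ [seq (x.1, - x.2) | x <- t']) y)
    = (fun y => (u y - cup_comb t y) - (v y - cup_comb t' y)).
  apply/funext => y; rewrite /cup_comb big_cat big_map /=.
  have -> : \sum_(j <- t') cup j.1.1 j.1.2 y *~ - j.2 = - cup_comb t' y.
    by rewrite -sumrN; apply: eq_bigr => j _; rewrite mulrNz.
  by change ((u - v) y) with (u y - v y); rewrite /cup_comb; ring.
exact: zero_H2_quotB u_red v_red.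
Qed.

Lemma cup_reducible_cup (a b : G -> 'Z_q) :
  is_H1 q G mul a -> is_H1 q G mul b -> zero_H2 q G mul (cup a b) ->
  cup_reducible (cup a b).
Proof.
move=> a_H1 b_H1 ab0; exists [:: (a, b, 1%Z)].
  by move=> x [<-|[]]; split=> //; apply: H1_quot.
rewrite /cup_comb; under eq_fun do rewrite big_seq1 mulr1z subrr.
exact: zero_H2_quot0.
Qed.

Definition cup_reducibleb : {pred cochain2} := fun u => `[< cup_reducible u >].

Lemma cup_reducibleb_zmod_closed : zmod_closed cup_reducibleb.
Proof.
split; first exact/asboolP/cup_reducible0.
by move=> u v /asboolP u_red /asboolP v_red; apply/asboolP/cup_reducibleB.
Qed.

HB.instance Definition _ :=
  GRing.isZmodClosed.Build cochain2 cup_reducibleb cup_reducibleb_zmod_closed.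

Local Notation pi := (\pi_(Quotient.quot cup_reducibleb))%qT.

Lemma pi_cochain_eq0 (u : cochain2) : pi u = 0 <-> cup_reducible u.
Proof.
rewrite -(raddf0 pi); split=> [/eqP|u_red]; last apply/eqP;
  rewrite -Quotient.idealrBE subr0; [exact: asboolP | exact/asboolP].
Qed.

Lemma quadratic2_cup_reducible (l : seq ((G -> 'Z_q) * (G -> 'Z_q))) :
  quadratic2 q G mul ->
  (forall x, List.In x l -> is_H1_quot x.1 /\ is_H1_quot x.2) ->
  zero_H2 q G mul (fun y => \sum_(x <- l) cup x.1 x.2 y) ->
  cup_reducible (fun y => \sum_(x <- l) cup x.1 x.2 y).
Proof.
move=> quad l_H1 l0; apply/pi_cochain_eq0; rewrite -fct_sumE raddf_sum.
apply: (quad l _ l0 _ (fun a b => pi (cup a b))).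
- by move=> x /l_H1 [[? _] [? _]].
- by move=> a a' b _ _ _; rewrite cup_addl raddfD.
- by move=> a b b' _ _ _; rewrite cup_addr raddfD.
by move=> a b a_H1 b_H1 ab0; apply/pi_cochain_eq0/cup_reducible_cup.
Qed.

End Cochains.

Theorem lemma2p2 (p s q : nat) (G : topologicalType)
  (mul : G -> G -> G) (inv : G -> G) (one : G) :
  prime p -> (0 < s)%N -> q = (p ^ s)%N ->
  is_profinite_group mul inv one ->
  quadratic2 q G mul ->
  forall l : seq ((G -> 'Z_q) * (G -> 'Z_q)),
    (forall x, List.In x l -> is_H1_quot q G mul inv one x.1 /\
                              is_H1_quot q G mul inv one x.2) ->
    zero_H2 q G mul (fun y => \sum_(x <- l) cup q G x.1 x.2 y) ->
  exists t : seq ((G -> 'Z_q) * (G -> 'Z_q) * int),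
    (forall x, List.In x t -> [/\ is_H1_quot q G mul inv one x.1.1,
                                  is_H1_quot q G mul inv one x.1.2 &
                                  zero_H2 q G mul (cup q G x.1.1 x.1.2)]) /\
    zero_H2_quot q G mul inv one
      (fun y => \sum_(x <- l) cup q G x.1 x.2 y
                - \sum_(x <- t) (cup q G x.1.1 x.1.2 y *~ x.2)).
Proof.
move=> p_prime s_gt0 q_eq [groupG _ _ _ _] quad l l_H1 l0.
have q_gt1 : (1 < q)%N by rewrite q_eq -(expn0 p) ltn_exp2l ?prime_gt1.
have [t t_triv t_red] :=
  quadratic2_cup_reducible _ _ _ _ _ q_gt1 groupG _ quad l_H1 l0.
by exists t.
Qed.
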